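(* Let $\alpha=(x,u')$ and $\beta=(y,v')$ be distinct non-collinear points of $\mathcal{S}$ such that either ($x=y$ and $u'\neq v'$) or ($x\neq y$ and $u'=v'$). Then $|\{\alpha,\beta\}^{\perp}|\geq 2$ in $\mathcal{S}$.
   Context: Let $S=(P,L)$ and $S'=(P',L')$ be generalized quadrangles of order $(2,2)$ (every line has 3 points, every point lies on 3 lines, and for each point $x$ and line $l\not\ni x$ exactly one point of $l$ is collinear with $x$), with an isomorphism $x\mapsto x'$ from $S$ to $S'$. In a point-line geometry, $x^{\perp}$ is $x$ together with all points collinear with $x$, and $A^{\perp}=\bigcap_{a\in A}a^{\perp}$. A triad is a set of three pairwise non-collinear points, complete if $|T^{\perp}|=3$. The geometry $\mathcal{S}=(\mathcal{P},\mathcal{L})$ has point set $\mathcal{P}=\{(x,y')\in P\times P':y'\in x'^{\perp}\}$ and lines all $3$-subsets $\{(x,u'),(y,v'),(z,w')\}$ of $\mathcal{P}$ where $T=\{x,y,z\}$ (three distinct points) is a line or a complete triad of $S$ and $\{u',v',w'\}=T'^{\perp}$ in $S'$ with $u',v',w'$ distinct. *)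

From mathcomp Require Import all_boot.
Set Implicit Arguments. Unset Strict Implicit. Unset Printing Implicit Defensive.

Section Geometry.
Variable T : finType.

Definition collinear (Ls : {set {set T}}) (x y : T) : bool :=
  [exists l in Ls, (x \in l) && (y \in l)].

Definition perp (Pts : {set T}) (Ls : {set {set T}}) (x : T) : {set T} :=
  [set y in Pts | (y == x) || collinear Ls x y].

Definition perpS (Pts : {set T}) (Ls : {set {set T}}) (A : {set T}) : {set T} :=
  [set y in Pts | [forall a in A, y \in perp Pts Ls a]].

Definition is_GQ22 (Ls : {set {set T}}) : Prop :=
  [/\ (forall l, l \in Ls -> #|l| = 3),
      (forall x : T, #|[set l in Ls | x \in l]| = 3),
      (forall x y : T, x != y -> #|[set l in Ls | (x \in l) && (y \in l)]| <= 1)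
    & (forall (x : T) l, l \in Ls -> x \notin l ->
         #|[set y in l | collinear Ls x y]| = 1)].

Definition is_triad (Ls : {set {set T}}) (Tr : {set T}) : bool :=
  (#|Tr| == 3) &&
  [forall a in Tr, forall b in Tr, (a != b) ==> ~~ collinear Ls a b].

Definition complete_triad (Ls : {set {set T}}) (Tr : {set T}) : bool :=
  is_triad Ls Tr && (#|perpS setT Ls Tr| == 3).
End Geometry.

Section Construction.
Variables (P P' : finType) (L : {set {set P}}) (L' : {set {set P'}}) (f : P -> P').

Definition is_iso : Prop :=
  bijective f /\ (forall l : {set P}, (l \in L) = (f @: l \in L')).

(* point set of the new geometry: pairs (x,y') with y' in x'^perp *)
Definition SPts : {set P * P'} :=
  [set p : P * P' | p.2 \in perp setT L' (f p.1)].

Definition SLines : {set {set P * P'}} :=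
  [set A : {set P * P'} | [exists x : P, exists y : P, exists z : P,
     exists u : P', exists v : P', exists w : P',
       [&& A == [set (x, u); (y, v); (z, w)],
           A \subset SPts,
           [&& x != y, y != z & x != z],
           ([set x; y; z] \in L) || complete_triad L [set x; y; z],
           [set u; v; w] == perpS setT L' (f @: [set x; y; z])
         & [&& u != v, v != w & u != w]]]].
End Construction.

From mathcomp Require Import all_boot.
Set Implicit Arguments. Unset Strict Implicit. Unset Printing Implicit Defensive.

(* In GQ(2,2) every pair of non-collinear points a, b is regular: {a,b}^perp
   is a complete triad (a point lies on only three lines, so it cannot see four
   pairwise non-collinear points).  Hence T |-> T^perp is an involution on lines
   and complete triads, and two points u, v collinear with x lie in T^perp for
   some line or complete triad T through x.  Pulling the labels back along the
   isomorphism, the lines of the new geometry are the sets {(a, s(a)')} with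
   T a line or complete triad and s : T -> T^perp a bijection.
   For (x, u'), (x, v') write T^perp = {u, v, w}: every a in T \ {x} gives the
   common neighbour (a, w'), as the two bijections sending a to w and x to u,
   resp. v, differ by swapping u and v.  For (x, w'), (y, w') with T = {x, y, c}
   and w in T^perp, every t in T^perp \ {w} likewise gives (c, t'). *)

Section ThreeSets.
Variable T : finType.
Implicit Types (A : {set T}) (a b c : T).

Lemma set3_card3 A a b : #|A| = 3 -> a \in A -> b \in A -> a != b ->
  exists c, A = [set a; b; c].
Proof.
move=> cardA aA bA neq_ab.
have /cards1P[c Ec] : #|A :\ a :\ b| == 1.
  by move: cardA; rewrite (cardsD1 a) aA (cardsD1 b) !inE eq_sym neq_ab bA !add1n => -[->].
exists c; apply/setP => z; move/setP/(_ z): Ec; rewrite !inE.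
have [->|_] := eqVneq z a; first by rewrite aA.
have [->|_] := eqVneq z b; first by rewrite bA orbT.
by rewrite /= => ->.
Qed.

Lemma set3_neq a b c : #|[set a; b; c]| = 3 -> [&& a != b, b != c & a != c].
Proof.
move=> card3; apply/and3P; split; apply/eqP => E; move: card3; rewrite E.
- by rewrite setUid cards2; case: (_ != _).
- by rewrite -setUA setUid cards2; case: (_ != _).
- by rewrite setUAC setUid cards2; case: (_ != _).
Qed.

End ThreeSets.

Section Quadrangle.
Variables (T : finType) (L : {set {set T}}).
Implicit Types (A B l m : {set T}) (a b c d p q r s t x y z : T).
Local Notation col := (collinear L).
Local Notation perpS := (perpS setT L).

Lemma colP x y : reflect (exists2 l, l \in L & (x \in l) && (y \in l)) (col x y).
Proof. by apply: (iffP existsP) => -[l]; [case/andP; exists l | exists l; apply/andP]. Qed.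

Lemma col_sym x y : col x y = col y x.
Proof. by apply/colP/colP => -[l lL /andP[xl yl]]; exists l; rewrite ?xl ?yl. Qed.

Lemma col_line l x y : l \in L -> x \in l -> y \in l -> col x y.
Proof. by move=> lL xl yl; apply/colP; exists l; rewrite ?xl ?yl. Qed.

Hypothesis gqL : is_GQ22 L.

Lemma line_card l : l \in L -> #|l| = 3.
Proof. by case: gqL => cardL _ _ _; apply: cardL. Qed.

Lemma colxx x : col x x.
Proof.
case: gqL => _ pencil _ _.
have /card_gt0P[l] : 0 < #|[set l in L | x \in l]| by rewrite pencil.
by rewrite inE => /andP[lL xl]; apply: (col_line lL xl xl).
Qed.


Lemma mem_perp x y : (y \in perp setT L x) = col x y.
Proof. by rewrite !inE; case: eqP => [->|]; rewrite ?colxx. Qed.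

Lemma mem_perpS A y : (y \in perpS A) = [forall a in A, col a y].
Proof. by rewrite inE in_setT; apply: eq_forallb => a; rewrite mem_perp. Qed.

Lemma mem_perpS2 a b y : (y \in perpS [set a; b]) = col a y && col b y.
Proof.
rewrite mem_perpS; apply/forall_inP/andP => [col_y | [ay b_y] z].
  by split; apply: col_y; rewrite !inE eqxx ?orbT.
by rewrite !inE => /orP[] /eqP->.
Qed.

Lemma eq_lines l m x y : x != y -> l \in L -> m \in L ->
  x \in l -> y \in l -> x \in m -> y \in m -> l = m.
Proof.
case: gqL => _ _ lines2 _ nxy lL mL xl yl xm ym; apply/eqP; apply: contraTT (lines2 x y nxy).
by move=> nlm; rewrite -ltnNge; apply/card_gt1P; exists l, m; rewrite !inE lL mL xl yl xm ym.
Qed.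

Lemma gq_proj_ex x l : l \in L -> x \notin l -> exists2 y, y \in l & col x y.
Proof.
case: gqL => _ _ _ gq lL xl.
have /card_gt0P[y] : 0 < #|[set y in l | col x y]| by rewrite gq.
by rewrite inE => /andP[]; exists y.
Qed.

Lemma gq_proj_uniq x l y z : l \in L -> x \notin l -> y \in l -> z \in l ->
  col x y -> col x z -> y = z.
Proof.
case: gqL => _ _ _ gq lL xl yl zl xy xz.
have /cards1P[w Ew] : #|[set y in l | col x y]| == 1 by rewrite gq.
have : y \in [set y in l | col x y] by rewrite inE yl xy.
have : z \in [set y in l | col x y] by rewrite inE zl xz.
by rewrite Ew !inE => /eqP-> /eqP->.
Qed.

Lemma gq_proj_ncol m p q s t : m \in L -> p \in m -> s \in m -> t \in m -> p != t ->
  col p q -> ~~ col q s -> ~~ col q t.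
Proof.
move=> mL pm sm tm npt pq nqs; apply: contra npt => qt.
have qm : q \notin m by apply: contra nqs => qm; apply: col_line mL qm sm.
by apply/eqP; apply: gq_proj_uniq mL qm pm tm _ qt; rewrite col_sym.
Qed.

Lemma triangle_line x y z : col x y -> col y z -> col x z ->
  exists2 l, l \in L & [&& x \in l, y \in l & z \in l].
Proof.
move=> xy yz xz; have /colP[l lL /andP[xl yl]] := xy.
have [->|nxy] := eqVneq x y.
  by have /colP[m mL /andP[ym zm]] := yz; exists m; rewrite ?ym ?zm.
exists l; rewrite // xl yl /=; apply: contraT => zl.
rewrite col_sym in xz; rewrite col_sym in yz.
by have /eqP := gq_proj_uniq lL zl xl yl xz yz; rewrite (negbTE nxy).
Qed.

Lemma perpS_line m : m \in L -> perpS m = m.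
Proof.
move=> mL; apply/setP => y; rewrite mem_perpS.
apply/forall_inP/idP => [col_y | ym a am]; last exact: col_line mL am ym.
apply: contraT => ym; case: gqL => _ _ _ gq.
have := gq y m mL ym; suff -> : [set z in m | col y z] = m by rewrite line_card.
by apply/setP => z; rewrite inE; case zm: (z \in m); rewrite //= col_sym col_y.
Qed.

Lemma card_perp2 p q : ~~ col p q -> #|perpS [set p; q]| = 3.
Proof.
move=> npq; case: gqL => _ pencil _ _.
pose proj l := odflt p [pick r in l | col q r].
have qNl l : l \in L -> p \in l -> q \notin l.
  by move=> lL pl; apply: contra npq; apply: col_line lL pl.
have projP l : l \in L -> p \in l -> proj l \in l /\ col q (proj l).
  move=> lL pl; rewrite /proj; case: pickP => [r /andP[] | none] //=.
  by have [r rl qr] := gq_proj_ex lL (qNl l lL pl); have := none r; rewrite rl qr.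
have -> : perpS [set p; q] = proj @: [set l in L | p \in l].
  apply/setP => r; rewrite mem_perpS2; apply/andP/imsetP => [[pr qr] | [l]].
    have /colP[l lL /andP[pl rl]] := pr; exists l; first by rewrite inE lL pl.
    have [projl qproj] := projP l lL pl.
    exact: gq_proj_uniq lL (qNl l lL pl) rl projl qr qproj.
  rewrite inE => /andP[lL pl] ->; have [projl qproj] := projP l lL pl.
  by split=> //; apply: col_line lL pl projl.
rewrite card_in_imset ?pencil // => l m; rewrite !inE => /andP[lL pl] /andP[mL pm] Elm.
have [projl qproj] := projP l lL pl; have [projm _] := projP m mL pm.
have npr : p != proj l by apply: contra npq => /eqP->; rewrite col_sym.
by apply: (eq_lines npr lL mL pl projl pm); rewrite Elm.
Qed.

Lemma perp2_ncol a b r s : ~~ col a b ->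
  r \in perpS [set a; b] -> s \in perpS [set a; b] -> r != s -> ~~ col r s.
Proof.
rewrite !mem_perpS2 => nab /andP[ar br] /andP[a_s bs] nrs; apply/negP => rs.
have [la laL /and3P[al rla sla]] := triangle_line ar rs a_s.
have [lb lbL /and3P[bl rlb slb]] := triangle_line br rs bs.
have Elab := eq_lines nrs laL lbL rla sla rlb slb.
by move: nab; rewrite (col_line laL al) // Elab.
Qed.

Lemma card_ncol_pencil d (s : seq T) :
  all (col d) s -> pairwise (fun y z => ~~ col y z) s -> size s <= 3.
Proof.
move=> ds ncol_s; case: gqL => _ pencil _ _.
pose line_to y := odflt set0 [pick l in L | (d \in l) && (y \in l)].
have line_toP y : col d y -> [/\ line_to y \in L, d \in line_to y & y \in line_to y].
  rewrite /line_to; case: pickP => [l /and3P[]|none] //= /colP[l lL dyl].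
  by have := none l; rewrite lL dyl.
have uniq_lines : uniq (map line_to s).
  elim: s ds ncol_s => //= y s IH /andP[dy ds] /andP[ny ncol_s].
  rewrite IH // andbT; apply/mapP => -[z zs Eyz].
  have [yL _ yy] := line_toP y dy; have [_ _ zz] := line_toP z (allP ds z zs).
  by move: (allP ny z zs); rewrite Eyz in yL yy; rewrite (col_line yL yy zz).
rewrite -(size_map line_to) -(card_uniqP uniq_lines) -(pencil d).
apply/subset_leq_card/subsetP => l /mapP[y ys ->].
by have [yL dy _] := line_toP y (allP ds y ys); rewrite inE yL dy.
Qed.

Lemma perp2_regular a b c c1 c2 d : ~~ col a b ->
  perpS [set a; b] = [set c; c1; c2] -> col c d -> col c1 d -> col c2 d.
Proof.
move=> nab EC cd c1d.
have /and3P[ncc1 nc1c2 ncc2] : [&& c != c1, c1 != c2 & c != c2].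
  by apply: set3_neq; rewrite -EC card_perp2.
have [cC c1C c2C] :
    [/\ c \in perpS [set a; b], c1 \in perpS [set a; b] & c2 \in perpS [set a; b]].
  by rewrite EC !inE !eqxx ?orbT.
have Ncc1 := perp2_ncol nab cC c1C ncc1.
have Ncc2 := perp2_ncol nab cC c2C ncc2.
have Nc1c2 := perp2_ncol nab c1C c2C nc1c2.
move: cC c1C c2C; rewrite !mem_perpS2 => /andP[ac bc] /andP[ac1 bc1] /andP[ac2 bc2].
have [->|nda] := eqVneq d a; first by rewrite col_sym.
have [->|ndb] := eqVneq d b; first by rewrite col_sym.
have dD : d \in perpS [set c; c1] by rewrite mem_perpS2 cd c1d.
have aD : a \in perpS [set c; c1] by rewrite mem_perpS2 !(col_sym _ a) ac ac1.
have bD : b \in perpS [set c; c1] by rewrite mem_perpS2 !(col_sym _ b) bc bc1.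
have Nda := perp2_ncol Ncc1 dD aD nda.
have Ndb := perp2_ncol Ncc1 dD bD ndb.
apply: contraT => nc2d.
(* Projecting d onto the lines a c2 and b c2 gives, together with c and c1,
   four pairwise non-collinear points collinear with d. *)
have /colP[ma maL /andP[ama c2ma]] := ac2.
have /colP[mb mbL /andP[bmb c2mb]] := bc2.
have [a3 a3ma da3] : exists2 a3, a3 \in ma & col d a3.
  by apply: (gq_proj_ex maL); apply: contra Nda => dma; apply: col_line maL dma ama.
have [b3 b3mb db3] : exists2 b3, b3 \in mb & col d b3.
  by apply: (gq_proj_ex mbL); apply: contra Ndb => dmb; apply: col_line mbL dmb bmb.
have naa3 : a != a3 by apply: contra Nda => /eqP->.
have nbb3 : b != b3 by apply: contra Ndb => /eqP->.
have nc2a3 : c2 != a3 by apply: contra nc2d => /eqP->; rewrite col_sym.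
have nc2b3 : c2 != b3 by apply: contra nc2d => /eqP->; rewrite col_sym.
have Nca3 := gq_proj_ncol maL ama c2ma a3ma naa3 ac Ncc2.
have Nc1a3 := gq_proj_ncol maL ama c2ma a3ma naa3 ac1 Nc1c2.
have Ncb3 := gq_proj_ncol mbL bmb c2mb b3mb nbb3 bc Ncc2.
have Nc1b3 := gq_proj_ncol mbL bmb c2mb b3mb nbb3 bc1 Nc1c2.
have Nab3 : ~~ col a b3.
  by apply: gq_proj_ncol mbL c2mb bmb b3mb nc2b3 _ nab; rewrite col_sym.
have Na3b3 : ~~ col a3 b3.
  rewrite col_sym; apply: gq_proj_ncol maL c2ma ama a3ma nc2a3 (col_line mbL c2mb b3mb) _.
  by rewrite col_sym.
suff : 4 <= 3 by [].
apply: (card_ncol_pencil (d := d) (s := [:: c; c1; a3; b3])).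
  by rewrite /= da3 db3 (col_sym d c) (col_sym d c1) cd c1d.
by rewrite /= Ncc1 Nca3 Ncb3 Nc1a3 Nc1b3 Na3b3.
Qed.

Lemma perp2_complete a b : ~~ col a b -> complete_triad L (perpS [set a; b]).
Proof.
move=> nab; have cardC := card_perp2 nab.
have /card_gt1P[c [c1 [cC c1C ncc1]]] : 1 < #|perpS [set a; b]| by rewrite cardC.
have [c2 EC] := set3_card3 cardC cC c1C ncc1.
rewrite /complete_triad /is_triad cardC eqxx /=; apply/andP; split.
  apply/forall_inP => r rC; apply/forall_inP => s sC; apply/implyP.
  exact: perp2_ncol nab rC sC.
suff -> : perpS (perpS [set a; b]) = perpS [set c; c1].
  by rewrite card_perp2 ?(perp2_ncol nab).
apply/setP => y; rewrite mem_perpS2 mem_perpS EC.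
apply/forall_inP/andP => [col_y | [cy c1y] z].
  by split; apply: col_y; rewrite !inE eqxx ?orbT.
by rewrite !inE => /orP[/orP[]|] /eqP-> //; apply: perp2_regular nab EC cy c1y.
Qed.

Definition admissible A B := ((A \in L) || complete_triad L A) && (perpS A == B).

Lemma admissible_line m : m \in L -> admissible m m.
Proof. by move=> mL; rewrite /admissible mL perpS_line // eqxx. Qed.

Lemma admissible_card A B : admissible A B -> #|A| = 3 /\ #|B| = 3.
Proof.
case/andP=> /orP[AL | /andP[/andP[/eqP cardA _] /eqP cardB]] /eqP <- //.
by rewrite perpS_line // line_card.
Qed.

Lemma triad_ncol A a b : is_triad L A -> a \in A -> b \in A -> a != b -> ~~ col a b.
Proof.
case/andP=> _ /forall_inP/(_ a) ncolA aA bA.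
by move/forall_inP/(_ b bA)/implyP: (ncolA aA).
Qed.

Lemma triad_perpS A a b : complete_triad L A -> a \in A -> b \in A -> a != b ->
  perpS A = perpS [set a; b].
Proof.
case/andP=> triadA /eqP cardA aA bA nab.
apply/eqP; rewrite eqEcard card_perp2 ?cardA ?(triad_ncol triadA) // leqnn andbT.
by apply/subsetP => y; rewrite mem_perpS mem_perpS2 => /forall_inP col_y; rewrite !col_y.
Qed.

Lemma admissible_sym A B : admissible A B -> admissible B A.
Proof.
case/andP=> /orP[AL | triadA] /eqP EB; first by rewrite -EB perpS_line // admissible_line.
have [/andP[/eqP cardA _] _] := andP triadA.
have /card_gt1P[a [b [aA bA nab]]] : 1 < #|A| by rewrite cardA.
have nab' := triad_ncol (proj1 (andP triadA)) aA bA nab.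
have triadB : complete_triad L B by rewrite -EB (triad_perpS triadA aA bA nab) perp2_complete.
have [_ /eqP cardPB] := andP triadB.
rewrite /admissible triadB orbT /= eq_sym eqEcard cardPB cardA leqnn andbT.
apply/subsetP => x xA; rewrite mem_perpS; apply/forall_inP => y.
by rewrite -EB mem_perpS => /forall_inP/(_ x xA); rewrite col_sym.
Qed.

Lemma exists_admissible a b c : col a c -> col b c ->
  exists A B, [/\ admissible A B, c \in A, a \in B & b \in B].
Proof.
move=> ac bc; have [ab | nab] := boolP (col a b).
  have [m mL /and3P[am bm cm]] := triangle_line ab bc ac.
  by exists m, m; rewrite admissible_line.
exists (perpS [set a; b]), (perpS (perpS [set a; b])); split.
- by rewrite /admissible perp2_complete // orbT eqxx.
- by rewrite mem_perpS2 ac bc.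
- by rewrite mem_perpS; apply/forall_inP => z; rewrite mem_perpS2 (col_sym z) => /andP[].
- by rewrite mem_perpS; apply/forall_inP => z; rewrite mem_perpS2 (col_sym z) => /andP[].
Qed.
End Quadrangle.

Section Construction.
Variables (P P' : finType) (L : {set {set P}}) (L' : {set {set P'}}) (f : P -> P').
Hypotheses (gqL : is_GQ22 L) (gqL' : is_GQ22 L') (isoLf : is_iso L L' f).
Local Notation col := (collinear L).
Local Notation SP := (SPts L' f).
Local Notation SL := (SLines L L' f).

Lemma iso_inj : injective f.
Proof. by case: isoLf => /bij_inj. Qed.

Lemma col_iso a b : collinear L' (f a) (f b) = col a b.
Proof.
case: isoLf => -[g fK gK] Lf.
apply/colP/colP => -[l lL /andP[al bl]].
  exists (g @: l); first by rewrite Lf -imset_comp (eq_imset _ gK) imset_id.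
  by rewrite -(fK a) -(fK b) !imset_f.
by exists (f @: l); rewrite -?Lf // !imset_f.
Qed.

Lemma perpS_iso (A : {set P}) : perpS setT L' (f @: A) = f @: perpS setT L A.
Proof.
case: isoLf => -[g fK gK] _.
apply/setP => y; rewrite -(gK y) (mem_imset _ _ iso_inj) (mem_perpS gqL') (mem_perpS gqL).
apply/forall_inP/forall_inP => [col_y a aA | col_y _ /imsetP[a aA ->]].
  by rewrite -col_iso col_y ?imset_f.
by rewrite col_iso col_y.
Qed.

Lemma mem_SPts a b : ((a, f b) \in SP) = col a b.
Proof. by rewrite inE /= (mem_perp gqL') col_iso. Qed.

Lemma admissible_SLines a b c p q r : admissible L [set a; b; c] [set p; q; r] ->
  [set (a, f p); (b, f q); (c, f r)] \in SL.
Proof.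
move=> adm; have [/set3_neq neq_abc /set3_neq neq_pqr] := admissible_card gqL adm.
case/andP: adm => base /eqP Eperp.
have colT z t : z \in [set a; b; c] -> t \in [set p; q; r] -> col z t.
  by move=> zT; rewrite -Eperp (mem_perpS gqL) => /forall_inP/(_ z zT).
rewrite inE; apply/existsP; exists a; apply/existsP; exists b; apply/existsP; exists c.
apply/existsP; exists (f p); apply/existsP; exists (f q); apply/existsP; exists (f r).
rewrite eqxx neq_abc base perpS_iso Eperp !imsetU !imset_set1 eqxx !(inj_eq iso_inj) neq_pqr /=.
by rewrite andbT !subUset !sub1set !mem_SPts !colT // !inE eqxx ?orbT.
Qed.

Lemma admissible_perp a b c p q r : admissible L [set a; b; c] [set p; q; r] ->
  (c, f r) \in perp SP SL (a, f p).
Proof.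
move=> adm; have line := admissible_SLines adm.
have cr : col c r.
  case/andP: adm => _ /eqP Eperp.
  have : r \in perpS setT L [set a; b; c] by rewrite Eperp !inE eqxx orbT.
  by rewrite (mem_perpS gqL) => /forall_inP/(_ c); rewrite !inE eqxx orbT => /(_ isT).
rewrite inE mem_SPts cr /=; apply/orP; right; apply/existsP.
by exists [set (a, f p); (b, f q); (c, f r)]; rewrite line !inE !eqxx ?orbT.
Qed.

Lemma perp_same_point A B x u v :
  admissible L A B -> x \in A -> u \in B -> v \in B -> u != v ->
  2 <= #|perp SP SL (x, f u) :&: perp SP SL (x, f v)|.
Proof.
move=> adm xA uB vB nuv; have [cardA cardB] := admissible_card gqL adm.
have [w EB] := set3_card3 cardB uB vB nuv.
have common a : a \in A -> a != x ->
    (a, f w) \in perp SP SL (x, f u) :&: perp SP SL (x, f v).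
  move=> aA; rewrite eq_sym => nxa; have [b EA] := set3_card3 cardA xA aA nxa.
  rewrite inE; apply/andP; split.
    by apply: (admissible_perp (b := b) (q := v)); rewrite setUAC -EA -EB.
  by apply: (admissible_perp (b := b) (q := u)); rewrite setUAC -EA (setUC [set v]) -EB.
have /card_gt1P[a1 [a2 [a1A a2A na12]]] : 1 < #|A :\ x|.
  by move: cardA; rewrite (cardsD1 x) xA add1n => -[->].
move: a1A a2A; rewrite !inE => /andP[na1x a1A] /andP[na2x a2A].
apply/card_gt1P; exists (a1, f w), (a2, f w).
by rewrite !common // xpair_eqE negb_and na12.
Qed.

Lemma perp_same_label A B x y w :
  admissible L A B -> x \in A -> y \in A -> w \in B -> x != y ->
  2 <= #|perp SP SL (x, f w) :&: perp SP SL (y, f w)|.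
Proof.
move=> adm xA yA wB nxy; have [cardA cardB] := admissible_card gqL adm.
have [c EA] := set3_card3 cardA xA yA nxy.
have common t : t \in B -> t != w ->
    (c, f t) \in perp SP SL (x, f w) :&: perp SP SL (y, f w).
  move=> tB; rewrite eq_sym => nwt; have [s EB] := set3_card3 cardB wB tB nwt.
  rewrite inE; apply/andP; split.
    by apply: (admissible_perp (b := y) (q := s)); rewrite -EA setUAC -EB.
  by apply: (admissible_perp (b := x) (q := s)); rewrite (setUC [set y]) -EA setUAC -EB.
have /card_gt1P[t1 [t2 [t1B t2B nt12]]] : 1 < #|B :\ w|.
  by move: cardB; rewrite (cardsD1 w) wB add1n => -[->].
move: t1B t2B; rewrite !inE => /andP[nt1w t1B] /andP[nt2w t2B].
apply/card_gt1P; exists (c, f t1), (c, f t2).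
by rewrite !common // xpair_eqE (inj_eq iso_inj) negb_and nt12 orbT.
Qed.
End Construction.

Theorem lemma3p1 (P P' : finType) (L : {set {set P}}) (L' : {set {set P'}})
  (f : P -> P') :
  is_GQ22 L -> is_GQ22 L' -> is_iso L L' f ->
  forall (x y : P) (u v : P'),
  let alpha := (x, u) in let beta := (y, v) in
  alpha \in SPts L' f -> beta \in SPts L' f ->
  alpha != beta -> ~~ collinear (SLines L L' f) alpha beta ->
  (x = y /\ u <> v) \/ (x <> y /\ u = v) ->
  2 <= #|perp (SPts L' f) (SLines L L' f) alpha :&:
         perp (SPts L' f) (SLines L L' f) beta|.
Proof.
move=> gqL gqL' isoLf x y u v /=.
have [[g fK gK] _] := isoLf.
rewrite -(gK u) -(gK v); move: (g u) (g v) => {}u {}v.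
rewrite !(mem_SPts gqL' isoLf) => xu yv _ _ [[Exy nuv] | [/eqP nxy /(iso_inj isoLf) Euv]].
  subst y; rewrite col_sym in xu; rewrite col_sym in yv.
  have [A [B [adm xA uB vB]]] := exists_admissible gqL xu yv.
  by apply: (perp_same_point gqL gqL' isoLf adm xA uB vB); apply: contra_not_neq nuv => ->.
rewrite -{}Euv in yv *.
have [A [B [adm uA xB yB]]] := exists_admissible gqL xu yv.
exact: (perp_same_label gqL gqL' isoLf (admissible_sym gqL adm) xB yB uA nxy).
Qed.
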